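(* Let $M\ge1$ and let $\mathcal B\subset[0,1]$ be finite, $b_0=\max\mathcal B$. Let $$\Pi=\Big\{\pi\in[0,1]^{\{0,\dots,M-1\}\times\mathcal B\times\mathcal B}:\ \pi((m,b),b')=0\ \forall b'>b,\ \ \sum_{b'\le b}\pi((m,b),b')=1\ \forall m,b\Big\}.$$ For $\pi\in\Pi$ define $q(\pi)=\bm q\in[0,1]^{M\times\mathcal B}$ by $q_1(b)=\pi((0,b_0),b)$ and $q_{m+1}(b)=\sum_{b'\in\mathcal B}q_m(b')\pi((m,b'),b)$ for $m\in[M-1]$, $b\in\mathcal B$. Let $\mathcal Q_\Pi=\{q(\pi):\pi\in\Pi\}$ and $$\mathcal Q=\Big\{\bm q\in[0,1]^{M\times\mathcal B}:\ \sum_{b\in\mathcal B}q_m(b)=1\ \forall m\in[M],\ \ \sum_{b\le b'}q_{m+1}(b)\ge\sum_{b\le b'}q_m(b)\ \forall b'\in\mathcal B,\ m\in[M-1]\Big\}.$$ Then $\mathcal Q_\Pi=\mathcal Q$.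
   Context: A policy $\pi$ describes random generation of a non-increasing bid vector: $b_1$ is drawn from $\pi((0,b_0),\cdot)$ and $b_{m+1}$ from $\pi((m,b_m),\cdot)$; $q(\pi)_m(b)$ is then the marginal probability that $b_m=b$. *)

From mathcomp Require Import all_boot all_order all_algebra.
From mathcomp Require Import reals.
Set Implicit Arguments. Unset Strict Implicit. Unset Printing Implicit Defensive.
Import Order.TTheory GRing.Theory Num.Theory.
Local Open Scope ring_scope.

(* The bid set B is a duplicate-free sequence of reals in [0,1].
   A policy is pi : nat -> R -> R -> R, pi m b b' standing for pi((m,b),b');
   only its values for m < M and b, b' in B matter.
   A marginal vector is q : nat -> R -> R, q m b standing for q_m(b), with
   m ranging over 1..M and b over B. *)

Section Defs.
Variable R : realType.

Definition in_Pi (M : nat) (B : seq R) (pi : nat -> R -> R -> R) : Prop :=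
  (forall m b b', (m < M)%N -> b \in B -> b' \in B -> 0 <= pi m b b' <= 1) /\
  (forall m b b', (m < M)%N -> b \in B -> b' \in B -> b < b' -> pi m b b' = 0) /\
  (forall m b, (m < M)%N -> b \in B -> \sum_(b' <- B | b' <= b) pi m b b' = 1).

(* q(pi): q_1(b) = pi((0,b0),b), q_{m+1}(b) = sum_{b'} q_m(b') pi((m,b'),b).
   (index 0 is unused and set to 0) *)
Fixpoint q_of (B : seq R) (b0 : R) (pi : nat -> R -> R -> R) (m : nat) (b : R) : R :=
  match m with
  | 0 => 0
  | 1 => pi 0%N b0 b
  | m'.+1 => \sum_(b' <- B) q_of B b0 pi m' b' * pi m' b' b
  end.

Definition in_Q (M : nat) (B : seq R) (q : nat -> R -> R) : Prop :=
  (forall m b, (1 <= m <= M)%N -> b \in B -> 0 <= q m b <= 1) /\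
  (forall m, (1 <= m <= M)%N -> \sum_(b <- B) q m b = 1) /\
  (forall m b', (1 <= m)%N -> (m < M)%N -> b' \in B ->
     \sum_(b <- B | b <= b') q m.+1 b >= \sum_(b <- B | b <= b') q m b).

Definition in_QPi (M : nat) (B : seq R) (b0 : R) (q : nat -> R -> R) : Prop :=
  exists pi, in_Pi M B pi /\
    forall m b, (1 <= m <= M)%N -> b \in B -> q m b = q_of B b0 pi m b.

End Defs.

From mathcomp Require Import all_boot all_order all_algebra.
From mathcomp Require Import reals.
From mathcomp Require Import lra ring.
Set Implicit Arguments.
Unset Strict Implicit.
Unset Printing Implicit Defensive.

Import Order.TTheory GRing.Theory Num.Theory.
Local Open Scope ring_scope.

(* Each q_m(pi) is a probability vector because the rows of pi are, and since
   pi only lowers bids, q_{m+1} puts at least as much mass at or below any b'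
   as q_m does.  Conversely, for q in Q lay out the bids of q_m as consecutive
   intervals [F_m(b-), F_m(b)] of [0, 1], and likewise for q_{m+1}.  Moving b
   to b' with the length of the overlap of their intervals couples q_m with
   q_{m+1}, and the dominance F_{m+1} >= F_m makes the overlap vanish when
   b < b'.  Dividing by q_m(b) gives a policy in Pi whose marginals are q. *)

Section Distributions.
Variable R : realDomainType.
Implicit Types (s B : seq R) (p w h : R -> R) (P Q : pred R).

Lemma sumr_seq_ge0 B P w : {in B, forall c, 0 <= w c} ->
  0 <= \sum_(c <- B | P c) w c.
Proof. by move=> w0; rewrite big_seq_cond sumr_ge0 // => c /andP[cB _]; exact: w0. Qed.

Lemma ler_sum_subpred B P Q w : {in B, forall c, 0 <= w c} ->
  {in B, forall c, P c -> Q c} ->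
  \sum_(c <- B | P c) w c <= \sum_(c <- B | Q c) w c.
Proof.
move=> w0 PQ; rewrite (big_mkcond P) (big_mkcond Q) !big_seq; apply: ler_sum => c cB.
by case: ifP => [/(PQ c cB) -> // | _]; case: ifP => // _; exact: w0.
Qed.

Lemma ler_term_sum B w b : uniq B -> b \in B -> {in B, forall c, 0 <= w c} ->
  w b <= \sum_(c <- B) w c.
Proof. by move=> uB bB w0; rewrite (bigD1_seq b) //= lerDl sumr_seq_ge0. Qed.

Definition cdf B w b := \sum_(c <- B | c <= b) w c.
Definition cdf_lt B w b := \sum_(c <- B | c < b) w c.

Lemma cdfE B w b : uniq B -> b \in B -> cdf B w b = cdf_lt B w b + w b.
Proof.
move=> uB bB; rewrite /cdf /cdf_lt (big_mkcond (fun c => c <= b)) (bigD1_seq b) //=.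
rewrite lexx addrC big_mkcond [in RHS]big_mkcond; congr (_ + _); apply: eq_bigr => c _.
by rewrite lt_neqAle; case: (c != b).
Qed.

Lemma telescope_cdf_sorted s h w : sorted <%R s ->
  \sum_(b <- s) (h (cdf s w b) - h (cdf_lt s w b)) = h (\sum_(c <- s) w c) - h 0.
Proof.
elim: s h => [|x s IH] h /= xs_sorted; first by rewrite !big_nil subrr.
have /allP x_min := order_path_min lt_trans xs_sorted.
have cdf_x : cdf (x :: s) w x = w x.
  rewrite /cdf big_cons lexx big1_seq ?addr0 // => c /andP[cx cs].
  by have := x_min c cs; rewrite ltNge cx.
have cdf_lt_x : cdf_lt (x :: s) w x = 0.
  rewrite /cdf_lt big_cons ltxx big1_seq // => c /andP[cx cs].
  by have := x_min c cs; rewrite ltNge (ltW cx).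
rewrite big_cons cdf_x cdf_lt_x (eq_big_seq (fun b =>
  h (w x + cdf s w b) - h (w x + cdf_lt s w b))); last first.
  by move=> b bs; rewrite /cdf /cdf_lt !big_cons (ltW (x_min b bs)) x_min.
rewrite (IH (fun t => h (w x + t))) ?(path_sorted xs_sorted) // big_cons addr0.
by rewrite addrC addrA subrK.
Qed.

Lemma telescope_cdf B h w : uniq B ->
  \sum_(b <- B) (h (cdf B w b) - h (cdf_lt B w b)) = h (\sum_(c <- B) w c) - h 0.
Proof.
move=> uB; set s := sort <=%R B.
have Bs : perm_eq B s by rewrite perm_sym perm_sort.
have cdf_s b : cdf B w b = cdf s w b by rewrite /cdf (perm_big _ Bs).
have cdf_lt_s b : cdf_lt B w b = cdf_lt s w b by rewrite /cdf_lt (perm_big _ Bs).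
under eq_bigr do rewrite cdf_s cdf_lt_s.
by rewrite !(perm_big _ Bs) telescope_cdf_sorted // sort_lt_sorted.
Qed.

Definition distribution B p := {in B, forall b, 0 <= p b} /\ \sum_(b <- B) p b = 1.

Section CdfBounds.
Variables (B : seq R) (p : R -> R).
Hypotheses (uB : uniq B) (dp : distribution B p).

Lemma distribution_le1 b : b \in B -> p b <= 1.
Proof. by move=> bB; rewrite -dp.2 ler_term_sum //; exact: dp.1. Qed.

Lemma cdf_lt_ge0 b : 0 <= cdf_lt B p b.
Proof. exact: sumr_seq_ge0 dp.1. Qed.

Lemma cdf_lt_le_cdf b : cdf_lt B p b <= cdf B p b.
Proof. by apply: ler_sum_subpred dp.1 _ => c _ /ltW. Qed.

Lemma cdf_le_cdf_lt b b' : b < b' -> cdf B p b <= cdf_lt B p b'.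
Proof. by move=> bb'; apply: ler_sum_subpred dp.1 _ => c _ /le_lt_trans; apply. Qed.

Lemma cdf_le1 b : cdf B p b <= 1.
Proof. by rewrite -dp.2; exact: ler_sum_subpred dp.1 _. Qed.

Lemma telescope_min_cdf a : 0 <= a <= 1 ->
  \sum_(b <- B) (Num.min a (cdf B p b) - Num.min a (cdf_lt B p b)) = a.
Proof. by move=> /andP[a0 a1]; rewrite telescope_cdf // dp.2 (min_l a1) (min_r a0) subr0. Qed.

End CdfBounds.

(* The length of [a1, a2] ∩ [b1, b2] when a1 <= a2 and b1 <= b2. *)
Definition overlap (a1 a2 b1 b2 : R) :=
  Num.min a2 b2 - Num.min a1 b2 - Num.min a2 b1 + Num.min a1 b1.

Lemma overlapE a1 a2 b1 b2 : overlap a1 a2 b1 b2 =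
  (Num.min a2 b2 - Num.min a2 b1) - (Num.min a1 b2 - Num.min a1 b1).
Proof. by rewrite /overlap; ring. Qed.

Lemma overlapC a1 a2 b1 b2 : overlap a1 a2 b1 b2 = overlap b1 b2 a1 a2.
Proof. by rewrite /overlap (minC a1 b2) (minC a1 b1) (minC a2 b2) (minC a2 b1); ring. Qed.

Lemma overlap_bounds a1 a2 b1 b2 : a1 <= a2 -> b1 <= b2 ->
  0 <= overlap a1 a2 b1 b2 <= a2 - a1.
Proof.
move=> ? ?; rewrite /overlap !minEle.
by case: (leP a2 b2) => ?; case: (leP a1 b2) => ?; case: (leP a2 b1) => ?;
  case: (leP a1 b1) => ?; apply/andP; split; lra.
Qed.

Lemma overlap_eq0 a1 a2 b1 b2 : a1 <= a2 -> a2 <= b1 -> b1 <= b2 ->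
  overlap a1 a2 b1 b2 = 0.
Proof.
move=> ? ? ?; rewrite /overlap !minEle.
by case: (leP a2 b2) => ?; case: (leP a1 b2) => ?; case: (leP a2 b1) => ?;
  case: (leP a1 b1) => ?; lra.
Qed.

Definition quantile_coupling B p p' b b' :=
  overlap (cdf_lt B p b) (cdf B p b) (cdf_lt B p' b') (cdf B p' b').

Lemma quantile_couplingC B p p' b b' :
  quantile_coupling B p p' b b' = quantile_coupling B p' p b' b.
Proof. exact: overlapC. Qed.

Section QuantileCoupling.
Variables (B : seq R) (p p' : R -> R).
Hypotheses (uB : uniq B) (dp : distribution B p) (dp' : distribution B p').

Lemma quantile_coupling_bounds b b' : b \in B ->
  0 <= quantile_coupling B p p' b b' <= p b.
Proof.
move=> bB; have := overlap_bounds (cdf_lt_le_cdf dp b) (cdf_lt_le_cdf dp' b').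
by rewrite [X in X - _]cdfE // addrC addKr.
Qed.

Lemma quantile_coupling_row_sum b : b \in B ->
  \sum_(b' <- B) quantile_coupling B p p' b b' = p b.
Proof.
move=> bB; under eq_bigr do rewrite /quantile_coupling overlapE.
have cdf01 : 0 <= cdf B p b <= 1.
  by rewrite cdf_le1 // andbT (le_trans (cdf_lt_ge0 dp b) (cdf_lt_le_cdf dp b)).
have cdf_lt01 : 0 <= cdf_lt B p b <= 1.
  by rewrite cdf_lt_ge0 // (le_trans (cdf_lt_le_cdf dp b)) ?cdf_le1.
by rewrite sumrB !telescope_min_cdf // cdfE // addrC addKr.
Qed.

Lemma quantile_coupling_eq0 b b' : {in B, forall x, cdf B p x <= cdf B p' x} ->
  b \in B -> b < b' -> quantile_coupling B p p' b b' = 0.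
Proof.
move=> dom bB bb'; apply: overlap_eq0; rewrite ?cdf_lt_le_cdf //.
exact: le_trans (dom b bB) (cdf_le_cdf_lt dp' bb').
Qed.

End QuantileCoupling.

Lemma quantile_coupling_col_sum B p p' b' : uniq B ->
  distribution B p -> distribution B p' -> b' \in B ->
  \sum_(b <- B) quantile_coupling B p p' b b' = p' b'.
Proof.
move=> uB dp dp' b'B; under eq_bigr do rewrite quantile_couplingC.
exact: quantile_coupling_row_sum.
Qed.

Definition lowering_row B b (r : R -> R) :=
  [/\ {in B, forall b', 0 <= r b' <= 1}, {in B, forall b', b < b' -> r b' = 0}
    & \sum_(b' <- B | b' <= b) r b' = 1].

Lemma lowering_row_distribution B b r : lowering_row B b r -> distribution B r.
Proof.
move=> [r01 r0 r1]; split=> [b' /r01 /andP[] // | ].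
rewrite (bigID (fun b' => b' <= b)) /= r1 big1_seq ?addr0 // => b' /andP[b'b b'B].
by apply: r0; rewrite // ltNge.
Qed.

Lemma distribution_mix B p (r : R -> R -> R) : distribution B p ->
  {in B, forall b, distribution B (r b)} ->
  distribution B (fun b' => \sum_(b <- B) p b * r b b').
Proof.
move=> [p0 p1] dr; split=> [b' b'B | ].
  by rewrite big_seq sumr_ge0 // => b bB; rewrite mulr_ge0 ?p0 ?(dr b bB).1.
rewrite exchange_big /= -p1 big_seq [RHS]big_seq; apply: eq_bigr => b bB.
by rewrite -mulr_sumr (dr b bB).2 mulr1.
Qed.

Lemma cdf_le_cdf_mix B p (r : R -> R -> R) b' : {in B, forall b, 0 <= p b} ->
  {in B, forall b, lowering_row B b (r b)} ->
  cdf B p b' <= cdf B (fun c => \sum_(b <- B) p b * r b c) b'.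
Proof.
move=> p0 rl; rewrite /cdf exchange_big /= (big_mkcond (fun b => b <= b')) !big_seq.
apply: ler_sum => b bB; rewrite -mulr_sumr; have [r01 _ r1] := rl b bB.
have r0 : {in B, forall c, 0 <= r b c} by move=> c /r01 /andP[].
case: ifP => bb'; last by rewrite mulr_ge0 ?p0 ?sumr_seq_ge0.
rewrite -[X in X <= _]mulr1 ler_wpM2l ?p0 // -r1.
by apply: ler_sum_subpred r0 _ => c _ /le_trans; apply.
Qed.

End Distributions.

Section Policies.
Variable R : realType.
Implicit Types (B : seq R) (pi : nat -> R -> R -> R) (q : nat -> R -> R).

Lemma in_PiP M B pi : in_Pi M B pi <->
  (forall m b, (m < M)%N -> b \in B -> lowering_row B b (pi m b)).
Proof.
split=> [[p01 [pz p1]] m b mM bB | rows].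
  by split=> [b' b'B | b' b'B | ]; [exact: p01 | exact: pz | exact: p1].
split; [|split].
- by move=> m b b' mM bB b'B; have [r01 _ _] := rows m b mM bB; exact: r01.
- by move=> m b b' mM bB b'B; have [_ r0 _] := rows m b mM bB; exact: r0.
- by move=> m b mM bB; have [_ _ r1] := rows m b mM bB.
Qed.

Lemma q_of_SS B b0 pi m b :
  q_of B b0 pi m.+2 b = \sum_(b' <- B) q_of B b0 pi m.+1 b' * pi m.+1 b' b.
Proof. by []. Qed.

Lemma q_of_distribution M B b0 pi m : in_Pi M B pi -> b0 \in B ->
  (1 <= m <= M)%N -> distribution B (q_of B b0 pi m).
Proof.
move=> /in_PiP rows b0B; elim: m => [|[|m] IH] // /andP[_ mM].
  exact: lowering_row_distribution (rows 0%N b0 mM b0B).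
apply: distribution_mix; first by apply: IH; exact: ltnW.
by move=> b bB; apply: lowering_row_distribution (rows _ _ mM bB).
Qed.

Lemma cdf_q_of_le M B b0 pi m b : in_Pi M B pi -> b0 \in B ->
  (1 <= m)%N -> (m < M)%N ->
  cdf B (q_of B b0 pi m) b <= cdf B (q_of B b0 pi m.+1) b.
Proof.
case: m => [|m] // piP b0B _ mM; have /in_PiP rows := piP.
apply: cdf_le_cdf_mix => [c cB | c cB]; last exact: rows.
by have [q0 _] := q_of_distribution (m := m.+1) piP b0B (ltnW mM); exact: q0.
Qed.

Lemma eq_in_Q M B q q' :
  (forall m b, (1 <= m <= M)%N -> b \in B -> q m b = q' m b) ->
  in_Q M B q' -> in_Q M B q.
Proof.
move=> qq' [q01 [q1 qdom]]; split; [|split].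
- by move=> m b mM bB; rewrite qq' //; exact: q01.
- by move=> m mM; rewrite -(q1 m mM); apply: eq_big_seq => b /qq'->.
- move=> m b' m1 mM b'B.
  have cdf_qq' k : (1 <= k <= M)%N -> cdf B (q k) b' = cdf B (q' k) b'.
    move=> kM; rewrite /cdf big_seq_cond [RHS]big_seq_cond.
    by apply: eq_bigr => b /andP[bB _]; exact: qq'.
  have [mM' m1M] : (1 <= m <= M)%N /\ (1 <= m.+1 <= M)%N by rewrite m1 ltnW.
  by rewrite -/(cdf B (q m) b') -/(cdf B _ b') !cdf_qq' //; exact: qdom.
Qed.

Lemma in_Q_q_of M B b0 pi : uniq B -> b0 \in B -> in_Pi M B pi ->
  in_Q M B (q_of B b0 pi).
Proof.
move=> uB b0B piP; split; [|split].
- move=> m b mM bB; have dq := q_of_distribution piP b0B mM.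
  by rewrite dq.1 // (distribution_le1 uB dq).
- by move=> m mM; exact: (q_of_distribution piP b0B mM).2.
- by move=> m b' m1 mM _; exact: cdf_q_of_le b' piP b0B m1 mM.
Qed.

Lemma in_Q_distribution M B q m : in_Q M B q -> (1 <= m <= M)%N ->
  distribution B (q m).
Proof.
by move=> [q01 [q1 _]] mM; split=> [b /(q01 m b mM) /andP[] | ]; last exact: q1.
Qed.

Lemma lowering_row_delta B b : uniq B -> b \in B ->
  lowering_row B b (fun b' => (b == b')%:R).
Proof.
move=> uB bB; split=> [b' _ | b' _ bb' | ]; first by case: (b == b'); rewrite ?lexx ?ler01.
  by rewrite lt_eqF.
rewrite big_mkcond (bigD1_seq b) //= lexx eqxx big1 ?addr0 // => c cb.
by rewrite eq_sym (negbTE cb); case: ifP.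
Qed.

Lemma lowering_row_top B b0 p : uniq B -> distribution B p ->
  {in B, forall b, b <= b0} -> lowering_row B b0 p.
Proof.
move=> uB dp top; split=> [b bB | b bB b0b | ].
- by rewrite dp.1 // (distribution_le1 uB dp).
- by have := top b bB; rewrite leNgt b0b.
- by rewrite -dp.2 big_mkcond; apply: eq_big_seq => b /top ->.
Qed.

Lemma lowering_row_coupling B p p' b : uniq B ->
  distribution B p -> distribution B p' -> {in B, forall x, cdf B p x <= cdf B p' x} ->
  b \in B -> p b != 0 -> lowering_row B b (fun b' => quantile_coupling B p p' b b' / p b).
Proof.
move=> uB dp dp' dom bB pb0; have pb_gt0 : 0 < p b by rewrite lt_def pb0 dp.1.
split=> [b' _ | b' _ bb' | ].
- have /andP[c0 c1] := quantile_coupling_bounds uB dp dp' b' bB.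
  by rewrite divr_ge0 ?(ltW pb_gt0) //= ler_pdivrMr // mul1r.
- by rewrite (quantile_coupling_eq0 dp dp') // mul0r.
have row_le : \sum_(b' <- B | b' <= b) quantile_coupling B p p' b b' = p b.
  rewrite -(quantile_coupling_row_sum uB dp dp' bB) [RHS](bigID (fun b' => b' <= b)) /=.
  rewrite [X in _ = _ + X]big1_seq ?addr0 // => b' /andP[b'b _].
  by rewrite (quantile_coupling_eq0 dp dp') // ltNge.
by rewrite -mulr_suml row_le divff.
Qed.

(* Stage 0 starts from b0. *)
Definition coupling_policy B b0 q m b b' : R :=
  if m == 0%N then (if b == b0 then q 1%N b' else (b == b')%:R)
  else if q m b == 0 then (b == b')%:R
  else quantile_coupling B (q m) (q m.+1) b b' / q m b.

Lemma in_Pi_coupling_policy M B b0 q : uniq B -> {in B, forall b, b <= b0} ->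
  in_Q M B q -> in_Pi M B (coupling_policy B b0 q).
Proof.
move=> uB top qQ; apply/in_PiP => -[|m] b mM bB; rewrite /coupling_policy /=.
  case: eqP => [-> | _]; last exact: lowering_row_delta.
  exact: lowering_row_top uB (in_Q_distribution (m := 1%N) qQ mM) top.
case: eqP => [_ | /eqP qb0]; first exact: lowering_row_delta.
have [_ [_ qdom]] := qQ.
apply: lowering_row_coupling => //.
- exact: (in_Q_distribution (m := m.+1) qQ (ltnW mM)).
- exact: (in_Q_distribution (m := m.+2) qQ mM).
- by move=> x xB; exact: qdom.
Qed.

Lemma mul_coupling_policy M B b0 q m b b' : uniq B -> in_Q M B q ->
  (1 <= m)%N -> (m < M)%N -> b \in B ->
  q m b * coupling_policy B b0 q m b b' = quantile_coupling B (q m) (q m.+1) b b'.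
Proof.
move=> uB qQ m1 mM bB; rewrite /coupling_policy -[m == 0%N]negbK -lt0n m1 /=.
case: eqP => [qb0 | /eqP qb0]; last by rewrite mulrC divfK.
have dqm : distribution B (q m) by apply: (in_Q_distribution qQ); rewrite m1 ltnW.
have /andP[c0 c1] := quantile_coupling_bounds uB dqm
  (in_Q_distribution (m := m.+1) qQ mM) b' bB.
by rewrite qb0 mul0r; apply/esym/eqP; rewrite eq_le c0 andbT -qb0.
Qed.

Lemma q_of_coupling_policy M B b0 q : uniq B -> in_Q M B q ->
  forall m b, (1 <= m <= M)%N -> b \in B ->
  q m b = q_of B b0 (coupling_policy B b0 q) m b.
Proof.
move=> uB qQ; elim=> [|[|m] IH] b /andP[_ mM] bB //.
  by rewrite /coupling_policy /= eqxx.
rewrite q_of_SS -(quantile_coupling_col_sum uB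
  (in_Q_distribution (m := m.+1) qQ (ltnW mM)) (in_Q_distribution (m := m.+2) qQ mM) bB).
by apply: eq_big_seq => c cB; rewrite -IH ?(ltnW mM) // (mul_coupling_policy _ _ uB qQ).
Qed.

End Policies.

Theorem lemma1 (R : realType) (M : nat) (B : seq R) (b0 : R)
  (hM : (1 <= M)%N) (huniq : uniq B)
  (hB01 : forall b, b \in B -> 0 <= b <= 1)
  (hb0 : b0 \in B) (hb0max : forall b, b \in B -> b <= b0) :
  forall q : nat -> R -> R, in_QPi M B b0 q <-> in_Q M B q.
Proof.
move=> q; split=> [[pi [piP agree]] | qQ].
  exact: eq_in_Q agree (in_Q_q_of huniq hb0 piP).
exists (coupling_policy B b0 q); split; first exact: in_Pi_coupling_policy.
exact: q_of_coupling_policy.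
Qed.
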